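(* Let $\kappa$ be the critical scale and $S=S_\kappa$ the output of algorithm StochKnap (any parameter $C>0$). If $\mathcal A$ is any adaptive policy that selects items only from $N\setminus S$ and has cost at most $B$, then $\Pr[R(\mathcal A)<\kappa]\ge1-\epsilon$. In particular, for every adaptive policy on $N$ of cost at most $B$ selecting the random set $O$, $\Pr[R(O\setminus S)\ge\kappa]\le\epsilon$.
   Context: Algorithm StochKnap$(N,c,R,B,\epsilon)$ with parameter $C>0$: $N$ is a finite set of items, item $i$ has cost $c(i)>0$ and a nonnegative random reward $R(i)$, rewards independent; $W\ge1$ is an integer with $\sum_{i\in N}\mathbb E[R(i)]\le W$; $B>0$, $\epsilon\in(0,1)$. Let $T=\{i\in N: c(i)\le B\}$ and $D=CB$. For $\tau>0$ let $r_\tau(i)=\mathbb E[\min\{R(i)/\tau,1\}]$. Order $T$ as $i_1,i_2,\ldots$ with $r_\tau(i_j)/c(i_j)$ nonincreasing. If $c(T)\ge D$, let $t$ be the smallest index with $\sum_{j\le t}c(i_j)\ge D$, set $S_\tau=\{i_1,\ldots,i_t\}$ and slope $s_\tau=r_\tau(i_t)/c(i_t)$; otherwise $S_\tau=T$, $s_\tau=0$. Scale $\tau$ is rich if $s_\tau>\epsilon/B$, poor otherwise. Scales $\mathcal G=\{2^\ell:\ell\in\mathbb Z,0\le\ell\le\lceil\log_2W\rceil\}$; critical scale $\kappa$ = smallest poor scale in $\mathcal G$ (assumed to exist); output $S=S_\kappa$. For a set $I$, $R(I)=\sum_{i\in I}R(i)$. An adaptive policy sequentially selects distinct items, each choice possibly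 depending on previously observed rewards and internal randomness independent of unselected rewards; cost at most $B$ means the selected items always have total cost at most $B$; $R(\mathcal A)$ is the total reward of selected items. *)

From HB Require Import structures.
From mathcomp Require Import all_boot all_order all_algebra.
From mathcomp Require Import all_classical all_reals all_analysis.
Set Implicit Arguments. Unset Strict Implicit. Unset Printing Implicit Defensive.
Import Order.TTheory GRing.Theory Num.Theory.
Local Open Scope classical_set_scope.
Local Open Scope ring_scope.

Section StochKnap.
Variables (R : realType) (I : finType).

Definition costs (c : I -> R) (s : seq I) : R := \sum_(i <- s) c i.

Definition small_items (c : I -> R) (B : R) : seq I :=
  [seq i <- enum I | c i <= B].

(* r_tau(i) = E[min(R(i)/tau, 1)]  (finite since the integrand is in [0,1]) *)
Definition trunc_mean d (Om : measurableType d) (P : probability Om R)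
  (X : I -> Om -> R) (tau : R) (i : I) : R :=
  fine (\int[P]_w (Num.min (X i w / tau) 1)%:E)%E.

(* 0-based index t such that the prefix of length t+1 is the shortest one of
   cost >= D *)
Definition cut_idx (c : I -> R) (D : R) (s : seq I) : nat :=
  find (fun k => D <= costs c (take k.+1 s)) (iota 0 (size s)).

Definition S_of (c : I -> R) (D : R) (s : seq I) : seq I :=
  if D <= costs c s then take (cut_idx c D s).+1 s else s.

Definition slope_of (c : I -> R) (r : I -> R) (D : R) (s : seq I) : R :=
  if D <= costs c s then
    match drop (cut_idx c D s) s with i :: _ => r i / c i | [::] => 0 end
  else 0.

Definition valid_order (c : I -> R) (r : I -> R) (B : R) (s : seq I) : Prop :=
  perm_eq s (small_items c B) /\ sorted (fun i j => r j / c j <= r i / c i) s.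

(* a policy: at step t it selects item Some i or nothing (None) *)
Definition observed d (Om : measurableType d) (X : I -> Om -> R)
  (sel : nat -> Om -> option I) (t : nat) (w : Om) : R :=
  match sel t w with Some i => X i w | None => 0 end.

(* information available before step t: internal randomness G together with
   the choices and observed rewards of steps s < t *)
Definition info d (Om : measurableType d) (G : set (set Om)) (X : I -> Om -> R)
  (sel : nat -> Om -> option I) (t : nat) : set (set Om) :=
  <<s [set A | G A
        \/ (exists s o, (s < t)%N /\ A = sel s @^-1` [set o])
        \/ (exists s (Bm : set R), (s < t)%N /\ measurable Bm /\
              A = observed X sel s @^-1` Bm)] >>.

Definition selected d (Om : measurableType d) (sel : nat -> Om -> option I)
  (w : Om) : {set I} :=
  finset (fun i : I => `[< exists t, sel t w = Some i >]).

Definition adaptive_policy d (Om : measurableType d) (G : set (set Om))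
  (X : I -> Om -> R) (c : I -> R) (B : R) (sel : nat -> Om -> option I) : Prop :=
  (forall t i, info G X sel t (sel t @^-1` [set Some i]))
  /\ (forall s t w i, sel s w = Some i -> sel t w = Some i -> s = t)
  /\ (forall w, \sum_(i in selected sel w) c i <= B).

Definition mutually_independent d (Om : measurableType d) (P : probability Om R)
  (X : I -> Om -> R) : Prop :=
  forall Bs : I -> set R, (forall i, measurable (Bs i)) ->
    P (\bigcap_(i in [set: I]) (X i @^-1` Bs i)) =
    (\prod_(i in [set: I]) P (X i @^-1` Bs i))%E.

Definition indep_of_rewards d (Om : measurableType d) (P : probability Om R)
  (G : set (set Om)) (X : I -> Om -> R) : Prop :=
  forall A, G A -> forall Bs : I -> set R, (forall i, measurable (Bs i)) ->
    P (A `&` \bigcap_(i in [set: I]) (X i @^-1` Bs i)) =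
    (P A * P (\bigcap_(i in [set: I]) (X i @^-1` Bs i)))%E.

End StochKnap.

From HB Require Import structures.
From mathcomp Require Import all_boot all_order all_algebra.
From mathcomp Require Import all_classical all_reals all_analysis.
From mathcomp Require Import measurable_realfun lra.
Import Order.TTheory GRing.Theory Num.Theory.
Local Open Scope classical_set_scope.
Local Open Scope ring_scope.
Set Implicit Arguments. Unset Strict Implicit.

(* Let [A j] be the event that the policy selects item [j].  The policy can only
   observe [X j] after selecting [j], so [A j] is measurable with respect to the
   internal randomness and the other rewards, hence independent of [X j]:
   E[1_(A j) min(X j / k, 1)] = P(A j) r_k(j).  By Markov's inequality for the
   truncated total reward,
     P(R(A \ S) >= k) <= sum_(j notin S) P(A j) r_k(j)
                      <= s_k * sum_j c(j) P(A j) <= s_k * B <= eps,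
   since an item outside [S] either exceeds the budget (and is never selected)
   or comes after the greedy cut, so that r_k(j) <= s_k c(j); the last step is
   the poorness of the critical scale. *)

Section sigma_algebra_closure.
Variables (T : Type) (K : set (set T)).
Hypothesis sK : sigma_algebra setT K.

Lemma sigma_algebra_set0 : K set0.
Proof. by case: sK. Qed.

Lemma sigma_algebra_setT : K setT.
Proof. by case: sK => K0 KC _; rewrite -(setD0 setT); apply: KC. Qed.

Lemma sigma_algebra_const (b : Prop) : K [set _ | b].
Proof.
have [bT|bF] := pselect b.
  by rewrite (_ : [set _ | b] = setT); [exact: sigma_algebra_setT|apply/seteqP; split].
by rewrite (_ : [set _ | b] = set0); [exact: sigma_algebra_set0|apply/seteqP; split].
Qed.

Lemma sigma_algebra_setC A : K A -> K (~` A).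
Proof. by case: sK => _ KC _ KA; rewrite -setTD; apply: KC. Qed.

Lemma sigma_algebra_setU A B : K A -> K B -> K (A `|` B).
Proof.
case: sK => _ _ KU KA KB; rewrite -bigcup2E.
by apply: KU => -[|[|n]] //=; exact: sigma_algebra_set0.
Qed.

Lemma sigma_algebra_setI A B : K A -> K B -> K (A `&` B).
Proof.
move=> KA KB; rewrite -[A `&` B]setCK setCI.
by apply/sigma_algebra_setC/sigma_algebra_setU; apply: sigma_algebra_setC.
Qed.

Lemma sigma_algebra_exists (J : eqType) (F : J -> set T) (s : seq J) :
  (forall j, K (F j)) -> K [set w | exists2 j, j \in s & F j w].
Proof.
move=> KF; elim: s => [|j s IH].
  rewrite (_ : [set w | _] = set0); first exact: sigma_algebra_set0.
  by apply/seteqP; split=> w // [].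
rewrite (_ : [set w | _] = F j `|` [set w | exists2 j, j \in s & F j w]).
  exact: sigma_algebra_setU.
apply/seteqP; split=> w /=.
  by move=> [k]; rewrite in_cons => /orP[/eqP->|ks] Fk; [left|right; exists k].
move=> [Fj|[k ks Fk]]; first by exists j; rewrite ?mem_head.
by exists k; rewrite ?in_cons ?ks ?orbT.
Qed.

End sigma_algebra_closure.

Definition trace_system (T : Type) (K : set (set T)) (E : set T) : set (set T) :=
  [set A | exists2 A', K A' & forall w, E w -> (A w <-> A' w)].

Section trace_system.
Variables (T : Type) (K : set (set T)).

Lemma sigma_algebra_trace_system E :
  sigma_algebra setT K -> sigma_algebra setT (trace_system K E).
Proof.
move=> sK; split.
- by exists set0 => //; apply: sigma_algebra_set0.
- move=> A [A' KA' AA']; exists (~` A'); first exact: sigma_algebra_setC.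
  by move=> w Ew /=; have := AA' w Ew; tauto.
- move=> F KF.
  have /choice[F' hF'] k : exists A', K A' /\ forall w, E w -> (F k w <-> A' w).
    by case: (KF k) => A' KA' h; exists A'.
  exists (\bigcup_k F' k); first by case: sK => _ _; apply=> n; case: (hF' n).
  move=> w Ew; split=> -[k _ Fk]; exists k => //.
    by case: (hF' k) => _ h; apply/(h w Ew).
  by case: (hF' k) => _ h; apply/(h w Ew).
Qed.

Lemma sub_trace_system E : K `<=` trace_system K E.
Proof. by move=> A KA; exists A. Qed.

Lemma trace_system_sub E E' : E' `<=` E -> trace_system K E `<=` trace_system K E'.
Proof. by move=> sE A [A' KA' h]; exists A' => // w /sE; apply: h. Qed.

End trace_system.

(** * The selection events are determined by the other rewards *)

Definition selected_event (I : finType) d (Om : measurableType d)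
  (sel : nat -> Om -> option I) (j : I) : set Om := [set w | j \in selected sel w].

Section selection_event.
Variables (R : realType) (I : finType) (d : measure_display) (Om : measurableType d).
Variables (X : I -> Om -> R) (G H : set (set Om)) (sel : nat -> Om -> option I).
Variable i : I.
Hypothesis sH : sigma_algebra setT H.
Hypothesis GH : G `<=` H.
Hypothesis XH : forall j (Bm : set R), j != i -> measurable Bm -> H (X j @^-1` Bm).
Hypothesis sel_info : forall t j, info G X sel t (sel t @^-1` [set Some j]).

Definition unselected t := [set w | forall s, (s < t)%N -> sel s w <> Some i].

Lemma unselected_sub s t : (s <= t)%N -> unselected t `<=` unselected s.
Proof. by move=> st w h u us; apply: h; exact: leq_trans us st. Qed.

Lemma unselectedS t :
  unselected t.+1 = unselected t `&` ~` (sel t @^-1` [set Some i]).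
Proof.
apply/seteqP; split=> w /=.
  by move=> h; split; [move=> s st; apply: h; exact: ltnW|exact: h].
by move=> [h ht] s; rewrite ltnS leq_eqVlt => /orP[/eqP->|]; [exact: ht|exact: h].
Qed.

Lemma sel_info_le s t j : (s <= t)%N -> info G X sel t (sel s @^-1` [set Some j]).
Proof.
rewrite leq_eqVlt => /orP[/eqP->|st]; first exact: sel_info.
by apply: sub_sigma_algebra; right; left; exists s, (Some j).
Qed.

Section step.
Variable t : nat.
Hypothesis traced : info G X sel t `<=` trace_system H (unselected t).

Let sT := sigma_algebra_trace_system (unselected t.+1) sH.

Lemma sel_traced s o : (s <= t)%N ->
  trace_system H (unselected t.+1) (sel s @^-1` [set o]).
Proof.
move=> st.
have Some_traced j : trace_system H (unselected t.+1) (sel s @^-1` [set Some j]).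
  apply: (trace_system_sub (unselected_sub (leqnSn t))); apply: traced.
  exact: sel_info_le.
case: o => [j|]; first exact: Some_traced.
rewrite (_ : sel s @^-1` [set None] =
    ~` [set w | exists2 j, j \in enum I & sel s w = Some j]).
  by apply: (sigma_algebra_setC sT); apply: (sigma_algebra_exists sT).
apply/seteqP; split=> w /=; first by move=> -> [].
by case: (sel s w) => // j []; exists j; rewrite ?mem_enum.
Qed.

Lemma observed_traced s Bm : (s <= t)%N -> measurable Bm ->
  trace_system H (unselected t.+1) (observed X sel s @^-1` Bm).
Proof.
move=> st mB.
rewrite (_ : observed X sel s @^-1` Bm =
    (sel s @^-1` [set None] `&` [set _ | Bm 0]) `|`
    [set w | exists2 j, j \in enum I & (sel s @^-1` [set Some j] `&` X j @^-1` Bm) w]).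
  apply: sigma_algebra_setU => //.
    apply: sigma_algebra_setI => //; first exact: sel_traced.
    apply: sub_trace_system; exact: sigma_algebra_const.
  apply: sigma_algebra_exists => // j; have [->|ji] := eqVneq j i.
    (* on [unselected t.+1], item [i] was not selected at step [s <= t] *)
    exists set0; first exact: sigma_algebra_set0.
    by move=> w Ew; split=> //= -[si _]; exact: (Ew s st si).
  apply: sigma_algebra_setI => //; first exact: sel_traced.
  by apply: sub_trace_system; exact: XH.
apply/seteqP; split=> w; rewrite /observed /=; case: (sel s w) => [j|].
- by move=> Bj; right; exists j; rewrite ?mem_enum.
- by move=> B0; left.
- by case=> [[]//|[k _ [[<-]]]].
- by case=> [[]//|[k _ []]].
Qed.

Lemma unselectedS_in : H (unselected t) -> H (unselected t.+1).
Proof.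
move=> Ht; have [A' HA' h] := traced (@sel_info t i).
rewrite (_ : unselected t.+1 = unselected t `&` ~` A').
  by apply: sigma_algebra_setI => //; exact: sigma_algebra_setC.
rewrite unselectedS; apply/seteqP; split=> w /= [Ew nw]; split=> // Aw.
  by apply: nw; apply/(h w Ew).
by apply: nw; apply/(h w Ew).
Qed.

End step.

Lemma info_traced_step t :
  (forall s o, (s < t)%N -> trace_system H (unselected t) (sel s @^-1` [set o])) ->
  (forall s Bm, (s < t)%N -> measurable Bm ->
     trace_system H (unselected t) (observed X sel s @^-1` Bm)) ->
  info G X sel t `<=` trace_system H (unselected t).
Proof.
move=> selT obsT; apply: smallest_sub; first exact: sigma_algebra_trace_system.
move=> A [GA|[[u [ob [ut ->]]]|[u [Bm [ut [mB ->]]]]]].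
- apply: sub_trace_system; exact: GH.
- exact: selT.
- exact: obsT.
Qed.

(* Until [i] is selected, [X i] has not been observed: on [unselected t], every
   event known before step [t] agrees with an event of [H]. *)
Lemma unselected_traced t :
  H (unselected t) /\ info G X sel t `<=` trace_system H (unselected t).
Proof.
elim: t => [|t [Ht IH]].
  split; last by apply: info_traced_step.
  rewrite (_ : unselected 0 = setT); first exact: sigma_algebra_setT.
  by apply/seteqP; split.
split; first exact: unselectedS_in.
apply: info_traced_step => s.
  by move=> ob; apply: (sel_traced IH).
by move=> Bm; apply: (observed_traced IH).
Qed.

Hypothesis sel_uniq : forall s t w j, sel s w = Some j -> sel t w = Some j -> s = t.

Lemma selected_event_in : H (selected_event sel i).
Proof.
rewrite (_ : selected_event sel i =
    \bigcup_t (sel t @^-1` [set Some i] `&` unselected t)).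
  case: sH => _ _; apply=> t; have [Ht IH] := unselected_traced t.
  have [A' HA' h] := IH _ (@sel_info t i).
  rewrite (_ : _ `&` _ = A' `&` unselected t); first exact: sigma_algebra_setI.
  by apply/seteqP; split=> w /= [Sw Ew]; split=> //; apply/(h w Ew).
apply/seteqP; split=> w; rewrite /selected_event /selected /= inE.
  move=> /asboolP [t st]; exists t => //; split => // s ts ss.
  by move: ts; rewrite (sel_uniq ss st) ltnn.
by move=> [t _ [st _]]; apply/asboolP; exists t.
Qed.

End selection_event.

(** * Independence from the other rewards *)

Section sigma_without.
Local Open Scope ereal_scope.
Variables (R : realType) (I : finType) (d : measure_display) (Om : measurableType d).
Variables (P : probability Om R) (X : I -> Om -> R) (G : set (set Om)) (i : I).
Hypothesis mX : forall j, measurable_fun setT (X j).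
Hypothesis sG : sigma_algebra setT G.
Hypothesis Gm : G `<=` measurable.

Definition cylinders_without := [set A : set Om | exists A0 (Bs : I -> set R),
  [/\ G A0, forall j, measurable (Bs j), Bs i = setT &
      A = A0 `&` \bigcap_(j in [set: I]) X j @^-1` Bs j]].

Definition sigma_without := <<s cylinders_without >>.

Lemma measurable_reward_preimage j (Bm : set R) :
  measurable Bm -> measurable (X j @^-1` Bm).
Proof. by move=> mB; rewrite -[X j @^-1` _]setTI; exact: mX. Qed.

Lemma cylinders_without_setI_closed : setI_closed cylinders_without.
Proof.
move=> A1 A2 [A0 [Bs [GA0 mBs Bsi ->]]] [A0' [Bs' [GA0' mBs' Bsi' ->]]].
exists (A0 `&` A0'), (fun j => Bs j `&` Bs' j); split.
- exact: sigma_algebra_setI.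
- by move=> j; apply: measurableI.
- by rewrite Bsi Bsi' setTI.
apply/seteqP; split=> w /=.
  by move=> [[a b] [a' b']]; split=> // j _; split; [exact: b|exact: b'].
by move=> [[a a'] b]; split; split=> // j _; case: (b j Logic.I).
Qed.

Lemma cylinders_without_measurable : cylinders_without `<=` measurable.
Proof.
move=> A [A0 [Bs [GA0 mBs _ ->]]]; apply: measurableI; first exact: Gm.
apply: fin_bigcap_measurable; first exact: finite_finset.
by move=> j _; apply: measurable_reward_preimage.
Qed.

Lemma sigma_without_measurable : sigma_without `<=` measurable.
Proof.
apply: smallest_sub; first exact: sigma_algebra_measurable.
exact: cylinders_without_measurable.
Qed.

Lemma sub_sigma_without : G `<=` sigma_without.
Proof.
move=> A GA; apply: sub_sigma_algebra; exists A, (fun=> setT); split=> //.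
by apply/seteqP; split=> w /=; [move=> Aw; split|case].
Qed.

Lemma sigma_without_preimage j (Bm : set R) :
  j != i -> measurable Bm -> sigma_without (X j @^-1` Bm).
Proof.
move=> ji mB; apply: sub_sigma_algebra.
exists setT, (fun k => if k == j then Bm else setT); split.
- exact: sigma_algebra_setT.
- by move=> k; case: ifP.
- by rewrite eq_sym (negbTE ji).
apply/seteqP; split=> w /=.
  by move=> Bw; split=> // k _; case: ifP => // /eqP ->.
by move=> [_ /(_ j Logic.I)]; rewrite eqxx.
Qed.

Hypothesis indepX : mutually_independent P X.
Hypothesis indepG : indep_of_rewards P G X.

Lemma cylinders_without_indep A (Bm : set R) : cylinders_without A ->
  measurable Bm -> P (A `&` X i @^-1` Bm) = P A * P (X i @^-1` Bm).
Proof.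
move=> [A0 [Bs [GA0 mBs Bsi ->]]] mB.
pose Bs' j := if j == i then Bm else Bs j.
have mBs' j : measurable (Bs' j) by rewrite /Bs'; case: ifP.
have -> : A0 `&` \bigcap_(j in [set: I]) X j @^-1` Bs j `&` X i @^-1` Bm =
    A0 `&` \bigcap_(j in [set: I]) X j @^-1` Bs' j.
  apply/seteqP; split=> w /=.
    move=> [[A0w Bw] Bmw]; split=> // j _; rewrite /Bs'.
    by case: ifP => [/eqP->//|_]; exact: Bw.
  move=> [A0w Bw]; split; last by have := Bw i Logic.I; rewrite /Bs' eqxx.
  split=> // j _; have := Bw j Logic.I; rewrite /Bs'.
  by case: ifP => [/eqP->|//]; rewrite Bsi.
have prodT (F : I -> \bar R) : \prod_(j in [set: I]) F j = \prod_j F j.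
  by apply: eq_bigl => j; rewrite in_setT.
rewrite !indepG // !indepX // !prodT (bigD1 i) //= [in RHS](bigD1 i) //=.
rewrite /Bs' eqxx Bsi preimage_setT probability_setT mul1e.
rewrite (eq_bigr (fun j => P (X j @^-1` Bs j))); last by move=> j /negbTE ->.
by rewrite -muleA [X in _ * X]muleC.
Qed.

Lemma sigma_without_indep A (Bm : set R) : sigma_without A -> measurable Bm ->
  P (A `&` X i @^-1` Bm) = P A * P (X i @^-1` Bm).
Proof.
move=> HA mB; set E := X i @^-1` Bm.
have mE : measurable E by exact: measurable_reward_preimage.
have PE : P E = (fine (P E))%:E by rewrite fineK //; exact: fin_num_measure.
pose L := [set A : set Om | measurable A /\ P (A `&` E) = P A * P E].
suff: sigma_without `<=` L by move=> /(_ A HA) [].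
apply: lambda_system_subset; first exact: cylinders_without_setI_closed.
- apply/dynkin_lambda_system; split.
  + by split=> //; rewrite setTI probability_setT mul1e.
  + move=> B [mB' hB]; split; first exact: measurableC.
    rewrite probability_setC // setIC -setDE.
    transitivity (P E - P (E `&` B)).
      by apply: measureD => //; exact: le_lt_trans (probability_le1 P mE) (ltry 1).
    by rewrite (setIC E B) hB muleBl ?mul1e //; exact: fin_num_measure.
  + move=> F tF hF; have mF n : measurable (F n) by case: (hF n).
    split; first by apply: bigcup_measurable => k _.
    rewrite setI_bigcupl !measure_bigcup //; last 2 first.
    * by move=> k _; apply: measurableI.
    * exact: trivIset_setIr.
    rewrite PE muleC -nneseriesZl; last by move=> k _; apply: measure_ge0.
    by apply: eq_eseriesr => k _; case: (hF k) => _ h; rewrite muleC -PE.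
- move=> B PB; split; first exact: cylinders_without_measurable.
  exact: cylinders_without_indep.
- by move=> B _ w.
Qed.

(* Restricting [P] to [A] and pushing it forward along [X i] gives [P A] times
   the law of [X i]. *)
Lemma integral_sigma_without A (f : R -> R) : sigma_without A ->
  measurable_fun setT f -> (forall y, (0 <= f y)%R) ->
  \int[P]_(w in A) (f (X i w))%:E = P A * \int[P]_w (f (X i w))%:E.
Proof.
move=> HA mf f0.
have mA : measurable A by exact: sigma_without_measurable.
have PA : P A = (fine (P A))%:E by rewrite fineK //; exact: fin_num_measure.
have mfX : measurable_fun setT (fun w => (f (X i w))%:E).
  by apply/measurable_EFinP; apply: measurableT_comp.
pose Q := mrestr P mA.
have QA : \int[P]_(w in A) (f (X i w))%:E = \int[Q]_w (f (X i w))%:E.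
  transitivity (\int[Q]_(w in A) (f (X i w))%:E).
    apply: eq_measure_integral => S mS SA; rewrite /Q /mrestr.
    by congr (P _); apply/seteqP; split=> w //= => [Sw|[]//]; split=> //; apply: SA.
  rewrite -(setUv A) ge0_integral_setU //; last 4 first.
  - exact: measurableC.
  - by rewrite setUv.
  - by move=> w _; rewrite lee_fin.
  - by rewrite /disj_set setICr.
  rewrite (@null_set_integral _ _ _ Q (~` A)) ?adde0 //.
  - exact: measurableC.
  - exact: measurable_funTS.
  - by rewrite /Q /= /mrestr setICl measure0.
have PA0 : (0 <= fine (P A))%R by apply: fine_ge0; apply: measure_ge0.
have pushE (mu : {measure set Om -> \bar R}) :
    \int[mu]_w (f (X i w))%:E = \int[pushforward mu (X i)]_y (f y)%:E.
  rewrite [RHS]ge0_integral_pushforward // ?preimage_setT //.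
  - exact/measurable_EFinP.
  - by move=> y _; rewrite lee_fin.
rewrite QA (pushE Q) (pushE P).
rewrite (eq_measure_integral (mscale (NngNum PA0) (pushforward P (X i)))).
  rewrite ge0_integral_mscale //= -?PA //; first exact/measurable_EFinP.
  by move=> y _; rewrite lee_fin.
move=> S mS _; rewrite /Q /= /pushforward /mrestr /mscale /= setIC.
by rewrite sigma_without_indep // -PA.
Qed.

End sigma_without.

(** * Truncated rewards *)

Section truncation.
Variable R : realType.
Implicit Types k x y : R.

(* The [max] makes [truncate k] nonnegative on the whole line, as needed to
   integrate it against the law of a reward; see [truncateE]. *)
Definition truncate k y : R := Num.min (Num.max y 0 / k) 1.

Lemma truncate_ge0 k y : 0 < k -> 0 <= truncate k y.
Proof.
by move=> k0; rewrite le_min ler01 andbT divr_ge0 ?le_max ?lexx ?orbT // ltW.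
Qed.

Lemma truncate_le1 k y : truncate k y <= 1.
Proof. by rewrite ge_min lexx orbT. Qed.

Lemma truncate0 k : truncate k 0 = 0.
Proof. by rewrite /truncate maxxx mul0r; apply/min_idPl; exact: ler01. Qed.

Lemma truncateE k y : 0 <= y -> truncate k y = Num.min (y / k) 1.
Proof. by move=> y0; rewrite /truncate (max_idPl y0). Qed.

Lemma truncate_ge k y : 0 < k -> k <= y -> truncate k y = 1.
Proof.
by move=> k0 ky; apply/min_idPr; rewrite ler_pdivlMr // mul1r le_max ky.
Qed.

Lemma minr1D x y : 0 <= x -> 0 <= y ->
  Num.min (x + y) 1 <= Num.min x 1 + Num.min y 1.
Proof.
by move=> x0 y0; rewrite /Order.min; do 3 case: ifPn; rewrite -?leNgt => *; lra.
Qed.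

Lemma truncateD k x y : 0 < k -> truncate k (x + y) <= truncate k x + truncate k y.
Proof.
move=> k0; rewrite /truncate.
have maxD : Num.max (x + y) 0 / k <= Num.max x 0 / k + Num.max y 0 / k.
  have [xm x0m] : x <= Num.max x 0 /\ 0 <= Num.max x 0.
    by rewrite !le_max !lexx !orbT.
  have [ym y0m] : y <= Num.max y 0 /\ 0 <= Num.max y 0.
    by rewrite !le_max !lexx !orbT.
  by rewrite -mulrDl ler_pM2r ?invr_gt0 // ge_max; apply/andP; split; lra.
apply: le_trans (le_min2 maxD (lexx 1)) _.
by apply: minr1D; rewrite divr_ge0 ?le_max ?lexx ?orbT // ltW.
Qed.

Lemma truncate_sum (J : Type) (s : seq J) (F : J -> R) k : 0 < k ->
  truncate k (\sum_(j <- s) F j) <= \sum_(j <- s) truncate k (F j).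
Proof.
move=> k0; elim: s => [|j s IH]; first by rewrite !big_nil truncate0.
by rewrite !big_cons; apply: le_trans (truncateD _ _ k0) _; rewrite lerD2l.
Qed.

Lemma measurable_truncate k : measurable_fun setT (truncate k).
Proof.
apply: measurable_minr; last exact: measurable_cst.
apply: measurable_funM; last exact: measurable_cst.
by apply: measurable_maxr => //; exact: measurable_cst.
Qed.

End truncation.

Section truncated_mean.
Local Open Scope ereal_scope.
Variables (R : realType) (I : finType) (d : measure_display) (Om : measurableType d).
Variables (P : probability Om R) (X : I -> Om -> R) (k : R) (i : I).
Hypothesis k0 : (0 < k)%R.
Hypothesis mXi : measurable_fun setT (X i).
Hypothesis Xi0 : forall w, (0 <= X i w)%R.

Lemma integral_truncate :
  \int[P]_w (truncate k (X i w))%:E = (trunc_mean P X k i)%:E.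
Proof.
have mT : measurable_fun setT (fun w => (truncate k (X i w))%:E).
  exact/measurable_EFinP/(measurableT_comp (measurable_truncate k)).
have T1 : \int[P]_w (truncate k (X i w))%:E <= 1.
  apply: (@le_trans _ _ (\int[P]_w (cst 1) w)).
    by apply: ge0_le_integral => // w _; rewrite lee_fin ?truncate_ge0 ?truncate_le1.
  by rewrite integral_cst // mul1e probability_le1.
rewrite /trunc_mean.
have -> : \int[P]_w (Num.min (X i w / k) 1)%:E = \int[P]_w (truncate k (X i w))%:E.
  by apply: eq_integral => w _; rewrite truncateE.
rewrite fineK // ge0_fin_numE ?(le_lt_trans T1) ?ltry //.
by apply: integral_ge0 => w _; rewrite lee_fin truncate_ge0.
Qed.

Lemma trunc_mean_ge0 : (0 <= trunc_mean P X k i)%R.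
Proof.
rewrite -lee_fin -integral_truncate.
by apply: integral_ge0 => w _; rewrite lee_fin truncate_ge0.
Qed.

End truncated_mean.

Lemma integral_indic_mul d (T : measurableType d) (R : realType)
    (mu : {measure set T -> \bar R}) (A : set T) (h : T -> R) :
  (\int[mu]_x (\1_A x * h x)%:E = \int[mu]_(x in A) (h x)%:E)%E.
Proof.
rewrite [RHS]integral_mkcond; apply: eq_integral => x _.
by rewrite /patch indicE; case: (x \in A); rewrite ?mul1r ?mul0r.
Qed.

Section adaptive_policy.
Local Open Scope ereal_scope.
Variables (R : realType) (I : finType) (d : measure_display) (Om : measurableType d).
Variables (P : probability Om R) (X : I -> Om -> R) (G : set (set Om)).
Variables (sel : nat -> Om -> option I) (c : I -> R) (B : R).
Hypothesis mX : forall j, measurable_fun setT (X j).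
Hypothesis sG : sigma_algebra setT G.
Hypothesis Gm : G `<=` measurable.
Hypothesis policy : adaptive_policy G X c B sel.

Local Notation A := (selected_event sel).

Lemma selected_event_sigma_without j : sigma_without X G j (A j).
Proof.
case: policy => sel_info [sel_uniq _].
apply: (selected_event_in (X := X) (G := G)) => //.
- exact: smallest_sigma_algebra.
- exact: sub_sigma_without.
- by move=> k Bm; apply: sigma_without_preimage.
Qed.

Lemma measurable_selected_event j : measurable (A j).
Proof.
apply: (sigma_without_measurable (i := j) mX Gm).
exact: selected_event_sigma_without.
Qed.

Lemma measurable_indic_mul j (h : Om -> R) : measurable_fun setT h ->
  measurable_fun setT (fun w => \1_(A j) w * h w)%R.
Proof.
apply: measurable_funM; exact/measurable_indic/measurable_selected_event.
Qed.

Lemma sum_selected_setI (F : I -> R) (U : {set I}) w :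
  (\sum_(j in selected sel w :&: U) F j = \sum_(j <- enum U) \1_(A j) w * F j)%R.
Proof.
rewrite big_enum big_mkcond [RHS]big_mkcond; apply: eq_bigr => j _.
rewrite indicE; have -> : (w \in A j) = (j \in selected sel w).
  by apply/idP/idP => [/set_mem|/mem_set].
by rewrite inE; case: (j \in U); case: (j \in selected sel w); rewrite ?mul1r ?mul0r.
Qed.

Hypothesis c0 : forall j, (0 <= c j)%R.

Lemma expected_cost_le (U : {set I}) :
  \sum_(j <- enum U) (c j)%:E * P (A j) <= B%:E.
Proof.
have mIc j : measurable_fun setT (fun w => (\1_(A j) w * c j)%:E).
  by apply/measurable_EFinP/measurable_indic_mul; exact: measurable_cst.
have Ic0 j w : setT w -> 0 <= (\1_(A j) w * c j)%:E.
  by move=> _; rewrite lee_fin mulr_ge0 ?indicE.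
rewrite (eq_bigr (fun j => \int[P]_w (\1_(A j) w * c j)%:E)); last first.
  move=> j _; rewrite integral_indic_mul integral_cst 1?muleC //.
  exact: measurable_selected_event.
rewrite -ge0_integral_sum //.
rewrite (eq_integral (fun w => (\sum_(j <- enum U) \1_(A j) w * c j)%:E)); last first.
  by move=> w _; rewrite sumEFin.
apply: (@le_trans _ _ (\int[P]_w B%:E)).
  apply: ge0_le_integral => //.
  - move=> w _; rewrite lee_fin; apply: sumr_ge0 => j _.
    by rewrite mulr_ge0 ?indicE.
  - apply/measurable_EFinP; apply: measurable_sum => j.
    by apply/measurable_EFinP; exact: mIc.
  move=> w _; rewrite lee_fin -sum_selected_setI.
  case: policy => _ [_ costB]; apply: le_trans (costB w).
  by rewrite [leRHS](big_setID U) /= lerDl sumr_ge0.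
by rewrite integral_cst // [X in _ * X](_ : _ = 1) ?mule1 //; exact: probability_setT.
Qed.

Lemma selected_event_over_budget j : (B < c j)%R -> A j = set0.
Proof.
move=> Bc; apply/seteqP; split=> w //= jw; case: policy => _ [_ /(_ w) costB].
move: Bc; rewrite ltNge => /negP; apply; apply: le_trans costB.
by rewrite (bigD1 j) //= lerDl sumr_ge0.
Qed.

Lemma measurable_reward_ge (U : {set I}) (k : R) :
  measurable [set w | (k <= \sum_(j in selected sel w :&: U) X j w)%R].
Proof.
pose g w := (\sum_(j <- enum U) \1_(A j) w * X j w)%R.
have mg : measurable_fun setT g.
  by apply: measurable_sum => j; exact: measurable_indic_mul.
rewrite (_ : [set w | _] = setT `&` g @^-1` `[k, +oo[).
  by apply: mg => //; exact: measurable_itv.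
apply/seteqP; split=> w; rewrite /g /= in_itv /= andbT sum_selected_setI.
  by move=> ?; split.
by case.
Qed.

Hypothesis X0 : forall j w, (0 <= X j w)%R.
Hypothesis indepX : mutually_independent P X.
Hypothesis indepG : indep_of_rewards P G X.

Lemma reward_tail_le (U : {set I}) (k : R) : (0 < k)%R ->
  P [set w | (k <= \sum_(j in selected sel w :&: U) X j w)%R] <=
  \sum_(j <- enum U) P (A j) * \int[P]_w (truncate k (X j w))%:E.
Proof.
move=> k0; have mE := measurable_reward_ge U k; set E := [set w | _] in mE *.
have mT j : measurable_fun setT (fun w => truncate k (X j w)).
  exact: measurableT_comp (measurable_truncate k) (mX j).
rewrite -(setIT E) -integral_indic //.
pose g w := (\sum_(j <- enum U) \1_(A j) w * truncate k (X j w))%R.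
apply: (@le_trans _ _ (\int[P]_w (g w)%:E)).
  apply: ge0_le_integral => //.
  - exact/measurable_EFinP/measurable_indic.
  - rewrite /g; apply/measurable_EFinP/measurable_sum => j.
    exact: measurable_indic_mul.
  move=> w _; rewrite /g lee_fin indicE; case: (boolP (w \in E)) => [/set_mem Ew|_] /=.
    rewrite /E /= sum_selected_setI in Ew; rewrite -(truncate_ge k0 Ew).
    apply: le_trans (truncate_sum _ _ k0) _; apply: ler_sum => j _.
    by rewrite indicE; case: (w \in A j); rewrite ?mul1r ?mul0r ?truncate0.
  by rewrite sumr_ge0 // => j _; rewrite mulr_ge0 ?truncate_ge0.
rewrite (eq_integral (fun w => \sum_(j <- enum U) (\1_(A j) w * truncate k (X j w))%:E)).
  rewrite ge0_integral_sum //; last first.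
  - by move=> j w _; rewrite lee_fin mulr_ge0 ?truncate_ge0.
  - by move=> j; apply/measurable_EFinP; exact: measurable_indic_mul.
  apply: lee_sum => j _; rewrite integral_indic_mul.
  rewrite [leLHS](integral_sigma_without mX sG Gm indepX indepG) //.
  - exact: selected_event_sigma_without.
  - exact: measurable_truncate.
  - by move=> y; rewrite truncate_ge0.
by move=> w _; rewrite /g sumEFin.
Qed.

Lemma reward_tail_le_slope (U : {set I}) (k sl : R) :
  (0 < k)%R -> (0 <= sl)%R ->
  (forall j, j \in U -> (c j <= B)%R -> (trunc_mean P X k j <= sl * c j)%R) ->
  P [set w | (k <= \sum_(j in selected sel w :&: U) X j w)%R] <= (sl * B)%:E.
Proof.
move=> k0 sl0 hr; apply: le_trans (reward_tail_le U k0) _.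
apply: (@le_trans _ _ (\sum_(j <- enum U) sl%:E * ((c j)%:E * P (A j)))).
  rewrite !big_enum /=; apply: lee_sum => j jU.
  rewrite (integral_truncate P k0 (mX j) (X0 j)) muleC muleA -EFinM.
  have [cB|Bc] := leP (c j) B.
    by apply: lee_wpmul2r; [exact: measure_ge0|rewrite lee_fin hr].
  by rewrite selected_event_over_budget // measure0 !mule0.
rewrite -ge0_sume_distrr; last by move=> j _; rewrite mule_ge0 // lee_fin.
by rewrite EFinM lee_wpmul2l ?lee_fin // expected_cost_le.
Qed.

End adaptive_policy.

(** * The greedy prefix *)

Section greedy_prefix.
Variables (R : realType) (I : finType) (c r : I -> R) (B D : R) (s : seq I).
Hypothesis c0 : forall j, 0 < c j.
Hypothesis order_s : valid_order c r B s.

Lemma slope_of_ge0 : (forall j, 0 <= r j) -> 0 <= slope_of c r D s.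
Proof.
move=> r0; rewrite /slope_of; case: ifP => // _; case: (drop _ s) => // j _.
by rewrite divr_ge0 // ltW.
Qed.

(* The items after the cut have ratio [r / c] at most the ratio of the item at
   the cut, which is the slope. *)
Lemma le_slope_of_notin j : c j <= B -> j \notin S_of c D s ->
  r j <= slope_of c r D s * c j.
Proof.
case: order_s => perm_s sorted_s cB.
have js : j \in s by rewrite (perm_mem perm_s) mem_filter cB mem_enum.
rewrite /S_of /slope_of; case: ifP => hD; last by rewrite js.
set k := cut_idx c D s.
have hk : (k < size s)%N.
  have s_gt0 : (0 < size s)%N by case: (s) js.
  have : has (fun k => D <= costs c (take k.+1 s)) (iota 0 (size s)).
    apply/hasP; exists (size s).-1; first by rewrite mem_iota add0n prednK // leqnn.
    by rewrite prednK // take_size.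
  by rewrite has_find size_iota.
rewrite (drop_nth j hk) => jn.
have jd : j \in drop k.+1 s.
  by move: js; rewrite -[s in j \in s](cat_take_drop k.+1) mem_cat (negbTE jn).
have tr : transitive (fun a b => r b / c b <= r a / c a).
  by move=> b a e h1 h2; exact: le_trans h2 h1.
have := drop_sorted k sorted_s; rewrite (drop_nth j hk) /=.
by move=> /(order_path_min tr) /allP /(_ j jd); rewrite ler_pdivrMr.
Qed.

End greedy_prefix.

Lemma probability_setC_ge d (T : measurableType d) (R : realType)
    (P : probability T R) (A : set T) (e : R) :
  measurable A -> (P A <= e%:E -> (1 - e)%:E <= P (~` A))%E.
Proof.
move=> mA; rewrite probability_setC // -(fineK (fin_num_measure P _ mA)) !lee_fin.
lra.
Qed.

Unset Implicit Arguments.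
Theorem mainTheorem8 (R : realType) (I : finType)
  (d : measure_display) (Om : measurableType d) (P : probability Om R)
  (c : I -> R) (X : I -> Om -> R) (W : nat) (B eps C : R)
  (ord : R -> seq I) (lk : nat) :
  (forall i, 0 < c i) ->
  (forall i, measurable_fun setT (X i)) ->
  (forall i w, 0 <= X i w) ->
  mutually_independent P X ->
  (1 <= W)%N ->
  (\sum_(i in [set: I]) \int[P]_w (X i w)%:E <= (W%:R)%:E)%E ->
  0 < B -> 0 < eps < 1 -> 0 < C ->
  (* for every scale tau, ord tau is an ordering of T by nonincreasing r_tau/c *)
  (forall tau, 0 < tau -> valid_order c (trunc_mean P X tau) B (ord tau)) ->
  (* kappa = 2^lk is the smallest poor scale in {2^l : 0 <= l <= ceil(log2 W)} *)
  (lk <= up_log 2 W)%N ->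
  slope_of c (trunc_mean P X (2 ^ lk)%:R) (C * B) (ord (2 ^ lk)%:R) <= eps / B ->
  (forall l, (l < lk)%N ->
     eps / B < slope_of c (trunc_mean P X (2 ^ l)%:R) (C * B) (ord (2 ^ l)%:R)) ->
  let kappa : R := (2 ^ lk)%:R in
  let S : {set I} := finset (fun i : I => i \in S_of c (C * B) (ord kappa)) in
  (forall (G : set (set Om)) (sel : nat -> Om -> option I),
     sigma_algebra setT G -> G `<=` measurable -> indep_of_rewards P G X ->
     adaptive_policy G X c B sel ->
     (forall w, selected sel w \subset ~: S) ->
     ((1 - eps)%:E <= P [set w | (\sum_(i in selected sel w) X i w < kappa)%R])%E)
  /\
  (forall (G : set (set Om)) (sel : nat -> Om -> option I),
     sigma_algebra setT G -> G `<=` measurable -> indep_of_rewards P G X ->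
     adaptive_policy G X c B sel ->
     (P [set w | (kappa <= \sum_(i in selected sel w :\: S) X i w)%R] <= eps%:E)%E).
Proof.
move=> c0 mX X0 indepX _ _ B0 _ _ ordered _ poor _ kappa S.
have k0 : (0 < kappa)%R by rewrite ltr0n expn_gt0.
have c_ge0 j : (0 <= c j)%R := ltW (c0 j).
have tail G sel : sigma_algebra setT G -> G `<=` measurable ->
    indep_of_rewards P G X -> adaptive_policy G X c B sel ->
    (P [set w | (kappa <= \sum_(i in selected sel w :&: ~: S) X i w)%R] <= eps%:E)%E.
  move=> sG Gm indepG policy.
  pose sl := slope_of c (trunc_mean P X kappa) (C * B) (ord kappa).
  apply: le_trans (reward_tail_le_slope mX sG Gm policy c_ge0 X0 indepX indepG
    (U := ~: S) (sl := sl) k0 _ _) _.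
  - by apply: slope_of_ge0 => // j; exact: trunc_mean_ge0.
  - move=> j; rewrite !inE => jS cjB; apply: (le_slope_of_notin c0 (ordered _ k0)) => //.
  - by rewrite lee_fin -ler_pdivlMr.
split=> [G sel sG Gm indepG policy avoidS|]; last first.
  move=> G sel sG Gm indepG policy; under eq_set do rewrite finset.setDE.
  exact: (tail G sel sG Gm indepG policy).
rewrite (_ : [set w | _] =
    ~` [set w | (kappa <= \sum_(i in selected sel w :&: ~: S) X i w)%R]).
  apply: probability_setC_ge; last exact: (tail G sel sG Gm indepG policy).
  exact: measurable_reward_ge mX sG Gm policy (~: S) kappa.
apply/seteqP; split=> w /=; have /finset.setIidPl -> := avoidS w.
  by rewrite ltNge => /negP.
by move/negP; rewrite -ltNge.
Qed.
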